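(* Let $n\ge0$ be an integer. In the polynomial ring $\mathbb C[\alpha_2,\alpha_3]$ with the monomial order described below, the leading term ideal of the ideal $I^0_n:=(\zeta_n,\zeta_{n+1},\overline\zeta_{n+1},\overline\zeta_{n+2})$ contains every monomial $\alpha_2^i\alpha_3^j$ with $2i+3j\ge 2n$.
   Context: The polynomials $\zeta_n,\overline\zeta_n\in\mathbb C[\alpha_2,\alpha_3]$ are defined by $\sum_{n\ge0}\zeta_nt^n=\exp(\alpha_2t+\alpha_3t^2/2)$ and $\sum_{n\ge0}\overline\zeta_nt^n=\exp(\alpha_2t-\alpha_3t^2/2)$; explicitly $\zeta_n=\sum_{0\le j\le n/2}\frac{\alpha_2^{n-2j}\alpha_3^j}{(n-2j)!\,j!\,2^j}$ and $\overline\zeta_n=\sum_{0\le j\le n/2}\frac{(-1)^j\alpha_2^{n-2j}\alpha_3^j}{(n-2j)!\,j!\,2^j}$. The monomial order is graded reverse lexicographic with $\deg\alpha_2=2$, $\deg\alpha_3=4$: $\alpha_2^i\alpha_3^j>\alpha_2^{i'}\alpha_3^{j'}$ if $2i+4j>2i'+4j'$, or if $2i+4j=2i'+4j'$ and the right-most nonzero entry of $(i-i',j-j')$ is negative. The leading term ideal of an ideal is the ideal generated by the leading monomials of its elements. *)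

From HB Require Import structures.
From mathcomp Require Import all_boot all_order all_algebra.
From mathcomp Require Import reals.
From mathcomp Require Import complex.
From mathcomp Require Import mpoly.

Set Implicit Arguments.
Unset Strict Implicit.
Unset Printing Implicit Defensive.

Import Order.TTheory GRing.Theory Num.Theory.
Local Open Scope ring_scope.

Definition i2 : 'I_2 := @Ordinal 2 0 isT.
Definition i3 : 'I_2 := @Ordinal 2 1 isT.

Definition mono (i j : nat) : 'X_{1..2} := [multinom [tuple i; j]].

Section Defs.
Variable C : fieldType.

Definition alpha2 : {mpoly C[2]} := 'X_i2.
Definition alpha3 : {mpoly C[2]} := 'X_i3.

Definition zeta (n : nat) : {mpoly C[2]} :=
  \sum_(j < (n./2).+1)
     (((n - 2 * j)`! * j`! * 2 ^ j)%:R)^-1 *: (alpha2 ^+ (n - 2 * j) * alpha3 ^+ j).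

Definition zetabar (n : nat) : {mpoly C[2]} :=
  \sum_(j < (n./2).+1)
     ((-1) ^+ j * (((n - 2 * j)`! * j`! * 2 ^ j)%:R)^-1)
        *: (alpha2 ^+ (n - 2 * j) * alpha3 ^+ j).

End Defs.

Definition wdeg (m : 'X_{1..2}) : nat := 2 * m i2 + 4 * m i3.

(* graded reverse lexicographic order: mono_gt m m' iff m > m', i.e.
   wdeg m > wdeg m', or wdeg m = wdeg m' and the right-most nonzero entry
   of m - m' is negative. *)
Definition mono_gt (m m' : 'X_{1..2}) : bool :=
  (wdeg m' < wdeg m)%N ||
  ((wdeg m == wdeg m') &&
   (if m i3 != m' i3 then (m i3 < m' i3)%N else (m i2 < m' i2)%N)).

Section Ideals.
Variable C : fieldType.

Definition in_ideal (k : nat) (g : 'I_k -> {mpoly C[2]}) (p : {mpoly C[2]}) : Prop :=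
  exists c : 'I_k -> {mpoly C[2]}, p = \sum_(l < k) c l * g l.

Definition lead_mono (p : {mpoly C[2]}) (m : 'X_{1..2}) : Prop :=
  m \in msupp p /\ forall m', m' \in msupp p -> m' != m -> mono_gt m m'.

Definition in_lead_term_ideal (I : {mpoly C[2]} -> Prop) (q : {mpoly C[2]}) : Prop :=
  exists (k : nat) (f : 'I_k -> {mpoly C[2]}) (m : 'I_k -> 'X_{1..2})
         (h : 'I_k -> {mpoly C[2]}),
    (forall l, I (f l) /\ f l != 0 /\ lead_mono (f l) (m l)) /\
    q = \sum_(l < k) h l * 'X_[m l].

Definition I0gens (n : nat) : 'I_4 -> {mpoly C[2]} :=
  fun l => match val l with
           | 0 => zeta C n
           | 1 => zeta C n.+1
           | 2 => zetabar C n.+1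
           | _ => zetabar C n.+2
           end.

Definition I0 (n : nat) : {mpoly C[2]} -> Prop := in_ideal (I0gens n).

End Ideals.

From HB Require Import structures.
From mathcomp Require Import all_boot all_order all_algebra.
From mathcomp Require Import reals.
From mathcomp Require Import complex.
From mathcomp Require Import mpoly.
From mathcomp Require Import zify ring.
Set Implicit Arguments.
Unset Strict Implicit.
Unset Printing Implicit Defensive.
Import Order.TTheory GRing.Theory Num.Theory.
Local Open Scope ring_scope.

(* The recurrences (m+2) zeta_(m+2) = alpha2 zeta_(m+1) + alpha3 zeta_m and
   (m+2) zetabar_(m+2) = alpha2 zetabar_(m+1) - alpha3 zetabar_m, run upwards and
   downwards from the generators, put alpha3^p zeta_m in I^0_n whenever m + p >= n,
   and alpha3^p zetabar_m whenever m + p > n.  Write a polynomial of weight 2D as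
   sum_b phi(b) alpha2^(D-2b) alpha3^b / ((D-2b)! b! 2^b): then alpha3^p zeta_(D-2p)
   has profile phi(b) = 2^p b(b-1)...(b-p+1), and alpha3^p zetabar_(D-2p) the same
   profile times (-1)^(b-p).  For D = i + 2j and e = ceil(j/2) the hypothesis reads
   n + e <= D, so the ideal contains every form of profile U(b) + (-1)^b W(b) with
   deg U <= e and deg W < e.  Choosing U + W to vanish at the even b < j and U - W
   at the odd b < j, but the profile not to vanish at j, yields an element of the
   ideal with leading monomial alpha2^i alpha3^j. *)

Lemma mono_i2 a b : mono a b i2 = a. Proof. by []. Qed.
Lemma mono_i3 a b : mono a b i3 = b. Proof. by []. Qed.

Lemma monoE (m : 'X_{1..2}) : m = mono (m i2) (m i3).
Proof. by apply/mnmP => -[[|[|k]] lt_k2] //; congr (m _); apply/val_inj. Qed.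

Lemma eq_mono a b c d : (mono a b == mono c d) = (a == c) && (b == d).
Proof.
apply/eqP/andP => [eq_ab_cd | [/eqP-> /eqP->]] //.
by rewrite -(mono_i2 a b) -(mono_i3 a b) eq_ab_cd !eqxx.
Qed.

Lemma monoB a b c d : (mono a b - mono c d)%MM = mono (a - c) (b - d).
Proof. by rewrite [LHS]monoE !mnmBE. Qed.

Lemma lem_mono a b c d : (mono c d <= mono a b)%MM = (c <= a)%N && (d <= b)%N.
Proof.
apply/mnm_lepP/andP => [le_cd_ab | [le_ca le_db] [[|[|k]] lt_k2]] //.
by split; [exact: (le_cd_ab i2) | exact: (le_cd_ab i3)].
Qed.

Section Coefficients.
Variable C : fieldType.
Implicit Types p q : {mpoly C[2]}.

Lemma mpoly2P p q : (forall a b, p@_(mono a b) = q@_(mono a b)) -> p = q.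
Proof. by move=> eq_pq; apply/mpolyP => m; rewrite [m]monoE. Qed.

Lemma alphaXE a b : alpha2 C ^+ a * alpha3 C ^+ b = 'X_[mono a b].
Proof.
rewrite !mpolyXn -mpolyXD; congr 'X_[_].
by rewrite [LHS]monoE !mnmDE !mulmnE !mnm1E /= !mul1n !mul0n addn0.
Qed.

Lemma mcoeffMX2 p a b c d :
  (p * 'X_[mono c d])@_(mono a b) =
  if (c <= a)%N && (d <= b)%N then p@_(mono (a - c) (b - d)) else 0.
Proof.
rewrite -lem_mono; case: ifP => [le_cd_ab | /negbT not_le].
  by rewrite -{1}(submK le_cd_ab) addmC mcoeffMX monoB.
apply/eqP; rewrite mcoeff_eq0 (perm_mem (msuppMX p _)).
by apply: contra not_le => /mapP[m _ ->]; exact: lem_addr.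
Qed.

End Coefficients.

Section IdealClosure.
Variables (C : fieldType) (k : nat) (g : 'I_k -> {mpoly C[2]}).
Local Notation J := (in_ideal g).

Lemma in_ideal_gen l : J (g l).
Proof.
exists (fun l' => (l' == l)%:R); rewrite (bigD1 l) //= eqxx mul1r big1 ?addr0 //.
by move=> l' /negbTE->; rewrite mul0r.
Qed.

Lemma in_ideal0 : J 0.
Proof. by exists (fun=> 0); rewrite big1 // => l _; rewrite mul0r. Qed.

Lemma in_idealD p q : J p -> J q -> J (p + q).
Proof.
move=> [c ->] [c' ->]; exists (fun l => c l + c' l).
by rewrite -big_split; apply: eq_bigr => l _; rewrite mulrDl.
Qed.

Lemma in_idealMl q p : J p -> J (q * p).
Proof.
move=> [c ->]; exists (fun l => q * c l).
by rewrite mulr_sumr; apply: eq_bigr => l _; rewrite mulrA.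
Qed.

Lemma in_idealMr q p : J p -> J (p * q).
Proof. by rewrite mulrC; apply: in_idealMl. Qed.

Lemma in_idealZ (a : C) p : J p -> J (a *: p).
Proof. by rewrite -mul_mpolyC; apply: in_idealMl. Qed.

Lemma in_idealB p q : J p -> J q -> J (p - q).
Proof. by move=> Jp Jq; rewrite -scaleN1r; apply/in_idealD/in_idealZ. Qed.

Lemma in_ideal_sum (I : Type) (r : seq I) (P : pred I) (F : I -> {mpoly C[2]}) :
  (forall i, P i -> J (F i)) -> J (\sum_(i <- r | P i) F i).
Proof. by move=> JF; apply: big_ind => //; [exact: in_ideal0 | exact: in_idealD]. Qed.

End IdealClosure.

Lemma size_subr_eq_coef (R : nzRingType) (P Q : {poly R}) k :
  (size P <= k.+1)%N -> (size Q <= k.+1)%N -> P`_k = Q`_k -> (size (P - Q)%R <= k)%N.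
Proof.
move=> sP sQ eq_k; apply/leq_sizeP => j le_kj; rewrite coefB.
have [-> | ne_jk] := eqVneq j k; first by rewrite eq_k subrr.
have lt_kj : (k < j)%N by rewrite ltn_neqAle eq_sym ne_jk.
by rewrite !nth_default ?subrr // (leq_trans _ lt_kj).
Qed.

Lemma lead_term_ideal_lead_mono (C : fieldType) (I : {mpoly C[2]} -> Prop) F m :
  I F -> F != 0 -> lead_mono F m -> in_lead_term_ideal I 'X_[m].
Proof.
move=> IF F_neq0 lead_F; exists 1%N, (fun=> F), (fun=> m), (fun=> 1).
by split=> [_ | ]; [split | rewrite big_ord1 mul1r].
Qed.

Section CharacteristicZero.
Variables (C : fieldType) (C0 : has_pchar0 C).
Implicit Types phi psi : nat -> C.

Lemma natf_eq0 m : (m%:R == 0 :> C) = (m == 0)%N.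
Proof. exact: (pcharf0P C).1 C0 m. Qed.

Lemma eqf_nat m k : (m%:R == k%:R :> C) = (m == k).
Proof.
wlog le_mk : m k / (m <= k)%N.
  by move=> eq_nat; case: (leqP m k) => [/eq_nat // | /ltnW/eq_nat]; rewrite eq_sym => ->.
by rewrite eq_sym -subr_eq0 -natrB // natf_eq0 subn_eq0 eqn_leq le_mk.
Qed.

Definition kappa (a b : nat) : C := ((a`! * b`! * 2 ^ b)%:R)^-1.

Lemma kappa_neq0 a b : kappa a b != 0.
Proof. by rewrite invr_eq0 natf_eq0 -lt0n !muln_gt0 !fact_gt0 expn_gt0. Qed.

Lemma kappaS a b : a.+1%:R * kappa a.+1 b = kappa a b.
Proof.
rewrite /kappa factS -!mulnA natrM invfM mulrA divff ?mul1r ?natf_eq0 //.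
Qed.

Lemma kappa_subn a b p : (p <= b)%N -> kappa a (b - p) = (2 ^ p * b ^_ p)%:R * kappa a b.
Proof.
move=> le_pb; rewrite /kappa -(ffact_fact le_pb) -[in (2 ^ b)%N](subnK le_pb) expnD.
have -> : (a`! * (b ^_ p * (b - p)`!) * (2 ^ (b - p) * 2 ^ p)
          = (2 ^ p * b ^_ p) * (a`! * (b - p)`! * 2 ^ (b - p)))%N by ring.
rewrite (natrM C (2 ^ p * b ^_ p)) invfM mulrA divff ?mul1r //.
by rewrite natf_eq0 -lt0n muln_gt0 expn_gt0 ffact_gt0.
Qed.

Definition form (D : nat) phi : {mpoly C[2]} :=
  \sum_(b < D./2.+1) (phi b * kappa (D - 2 * b) b) *: 'X_[mono (D - 2 * b) b].

Lemma zeta_form m : zeta C m = form m (fun=> 1).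
Proof. by apply: eq_bigr => b _; rewrite alphaXE mul1r. Qed.

Lemma zetabar_form m : zetabar C m = form m (fun b => (-1) ^+ b).
Proof. by apply: eq_bigr => b _; rewrite alphaXE. Qed.

Lemma mcoeff_form D phi a b :
  (form D phi)@_(mono a b) = if (a + 2 * b == D)%N then phi b * kappa a b else 0.
Proof.
rewrite raddf_sum /=.
under eq_bigr => c _ do rewrite mcoeffZ mcoeffX eq_mono.
case: eqP => [def_D | ne_D]; last first.
  rewrite big1 // => c _; case: andP => [[/eqP ? /eqP ?] | _]; last by rewrite mulr0.
  by have := ltn_ord c; lia.
have lt_b : (b < D./2.+1)%N by lia.
rewrite (bigD1 (Ordinal lt_b)) //= big1 => [|c ne_cb]; last first.
  case: andP => [[_ /eqP eq_cb] | _]; last by rewrite mulr0.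
  by case/eqP: ne_cb; apply/val_inj.
by rewrite (_ : D - 2 * b = a)%N ?eqxx ?mulr1 ?addr0 //; lia.
Qed.

Lemma eq_form D phi psi :
  (forall b, (2 * b <= D)%N -> phi b = psi b) -> form D phi = form D psi.
Proof. by move=> eq_phi; apply: eq_bigr => b _; rewrite eq_phi //; have := ltn_ord b; lia. Qed.

Lemma formD D phi psi : form D (fun b => phi b + psi b) = form D phi + form D psi.
Proof. by rewrite -big_split; apply: eq_bigr => b _; rewrite mulrDl scalerDl. Qed.

Lemma formZ D (c : C) phi : form D (fun b => c * phi b) = c *: form D phi.
Proof. by rewrite scaler_sumr; apply: eq_bigr => b _; rewrite scalerA mulrA. Qed.

Lemma form_sum D (I : Type) (r : seq I) (P : pred I) (F : I -> nat -> C) :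
  form D (fun b => \sum_(i <- r | P i) F i b) = \sum_(i <- r | P i) form D (F i).
Proof.
by rewrite /form exchange_big; apply: eq_bigr => b _; rewrite mulr_suml scaler_suml.
Qed.

Lemma form_mulX2 m phi :
  form m phi * alpha2 C = form m.+1 (fun b => (m.+1 - 2 * b)%:R * phi b).
Proof.
have -> : alpha2 C = 'X_[mono 1 0] by rewrite -alphaXE expr1 expr0 mulr1.
apply: mpoly2P => a b; rewrite mcoeffMX2 !mcoeff_form subn0.
case: a => [|a] /=; first by case: eqP => // <-; rewrite subnn mul0r mul0r.
rewrite subn1 /= addSn eqSS; case: eqP => // <-.
by rewrite -addSn addnK -kappaS mulrA [phi b * _]mulrC.
Qed.

Lemma form_mulX3n m p phi :
  form m phi * alpha3 C ^+ p =
  form (m + 2 * p) (fun b => (2 ^ p * b ^_ p)%:R * phi (b - p)%N).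
Proof.
have -> : alpha3 C ^+ p = 'X_[mono 0 p] by rewrite -alphaXE expr0 mul1r.
apply: mpoly2P => a b; rewrite mcoeffMX2 !mcoeff_form subn0 /=.
case: leqP => [le_pb | lt_bp]; last by rewrite ffact_small // muln0 !mul0r if_same.
have -> : (a + 2 * (b - p) == m)%N = (a + 2 * b == m + 2 * p)%N by apply/eqP/eqP; lia.
by case: eqP => // _; rewrite kappa_subn // mulrCA mulrA.
Qed.

Lemma form_geom_rec (s : C) m :
  m.+2%:R *: form m.+2 (fun b => s ^+ b) =
  form m.+1 (fun b => s ^+ b) * alpha2 C + s *: (form m (fun b => s ^+ b) * alpha3 C).
Proof.
rewrite form_mulX2 -[alpha3 C]expr1 form_mulX3n muln1 addn2 -!formZ -formD.
apply: eq_form => -[|b] le_b; first by rewrite ffact0n mul0r mulr0 addr0 subn0.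
by rewrite ffactn1 subn1 /= mulrCA -exprS -mulrDl -natrD expn1 subnK.
Qed.

Lemma in_ideal_ladder k (g : 'I_k -> {mpoly C[2]}) (x y : {mpoly C[2]}) (s : C)
    (z : nat -> {mpoly C[2]}) N :
  s != 0 -> (forall m, m.+2%:R *: z m.+2 = z m.+1 * x + s *: (z m * y)) ->
  in_ideal g (z N) -> in_ideal g (z N.+1) ->
  forall e m, (N <= m + e)%N -> in_ideal g (z m * y ^+ e).
Proof.
move=> s_neq0 z_rec J_N J_N1.
have J_up m : (N <= m)%N -> in_ideal g (z m).
  suff J_pair d : in_ideal g (z (N + d)%N) /\ in_ideal g (z (N + d).+1).
    by move=> le_Nm; rewrite -(subnKC le_Nm); case: (J_pair (m - N)%N).
  elim: d => [|d [J_d J_d1]]; first by rewrite addn0.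
  rewrite addnS; split=> //.
  have -> : z (N + d).+2 = (N + d).+2%:R^-1 *: (z (N + d).+1 * x + s *: (z (N + d) * y)).
    by rewrite -z_rec scalerA mulVf ?scale1r // natf_eq0.
  by apply/in_idealZ/in_idealD; [exact: in_idealMr | exact/in_idealZ/in_idealMr].
have z_down m : z m * y = s^-1 *: (m.+2%:R *: z m.+2 - z m.+1 * x).
  by rewrite z_rec addrC addKr scalerA mulVf ?scale1r.
elim=> [|e IHe] m le_N; first by rewrite expr0 mulr1; apply: J_up; rewrite addn0 in le_N.
have [le_Nm | lt_mN] := leqP N m; first exact/in_idealMr/J_up.
rewrite exprS mulrA z_down -scalerAl mulrBl -scalerAl mulrAC.
by apply/in_idealZ/in_idealB; [apply/in_idealZ | apply/in_idealMr]; apply: IHe; lia.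
Qed.

Lemma zeta_mulX3n_I0 n m e : (n <= m + e)%N -> I0 n (zeta C m * alpha3 C ^+ e).
Proof.
have zeta_geom m' : zeta C m' = form m' (fun b => 1 ^+ b).
  by rewrite zeta_form; apply: eq_form => b _; rewrite expr1n.
apply: (in_ideal_ladder (s := 1)); first exact: oner_neq0.
- by move=> m'; rewrite !zeta_geom form_geom_rec.
- exact: (in_ideal_gen (I0gens C n) (@Ordinal 4 0 isT)).
- exact: (in_ideal_gen (I0gens C n) (@Ordinal 4 1 isT)).
Qed.

Lemma zetabar_mulX3n_I0 n m e : (n < m + e)%N -> I0 n (zetabar C m * alpha3 C ^+ e).
Proof.
apply: (in_ideal_ladder (s := -1)); first by rewrite oppr_eq0 oner_neq0.
- by move=> m'; rewrite !zetabar_form form_geom_rec.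
- exact: (in_ideal_gen (I0gens C n) (@Ordinal 4 2 isT)).
- exact: (in_ideal_gen (I0gens C n) (@Ordinal 4 3 isT)).
Qed.

Lemma form_ffact_I0 n D p :
  (2 * p <= D)%N -> (n + p <= D)%N -> I0 n (form D (fun b => (b ^_ p)%:R)).
Proof.
move=> le_2p_D le_np_D.
have -> : form D (fun b => (b ^_ p)%:R) =
          (2 ^ p)%:R^-1 *: (zeta C (D - 2 * p) * alpha3 C ^+ p).
  rewrite zeta_form form_mulX3n subnK // -formZ; apply: eq_form => b _.
  by rewrite mulr1 natrM mulrA mulVf ?mul1r // natf_eq0 expn_eq0.
by apply/in_idealZ/zeta_mulX3n_I0; lia.
Qed.

Lemma form_sign_ffact_I0 n D p :
  (2 * p <= D)%N -> (n + p < D)%N -> I0 n (form D (fun b => (-1) ^+ b * (b ^_ p)%:R)).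
Proof.
move=> le_2p_D lt_np_D.
have -> : form D (fun b => (-1) ^+ b * (b ^_ p)%:R) =
          ((-1) ^+ p / (2 ^ p)%:R) *: (zetabar C (D - 2 * p) * alpha3 C ^+ p).
  rewrite zetabar_form form_mulX3n subnK // -formZ; apply: eq_form => b _.
  have [le_pb | lt_bp] := leqP p b; last by rewrite ffact_small // muln0 !(mulr0, mul0r).
  have two_p_neq0 : (2 ^ p)%:R != 0 :> C by rewrite natf_eq0 expn_eq0.
  by rewrite -{1}(subnK le_pb) exprD natrM; field.
by apply/in_idealZ/zetabar_mulX3n_I0; lia.
Qed.

Definition poly_of_roots (r : nat -> nat) (k : nat) : {poly C} :=
  \prod_(i < k) ('X - (r i)%:R%:P).

Lemma size_poly_of_roots r k : size (poly_of_roots r k) = k.+1.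
Proof. by rewrite size_prod_XsubC -[index_enum _]enumT size_enum_ord. Qed.

Lemma coef_poly_of_roots_top r k : (poly_of_roots r k)`_k = 1.
Proof.
have /monicP := monic_prod_XsubC (index_enum 'I_k) xpredT (fun i : 'I_k => (r i)%:R : C).
by rewrite lead_coefE -/(poly_of_roots r k) size_poly_of_roots.
Qed.

Lemma horner_poly_of_roots r k x : (poly_of_roots r k).[x] = \prod_(i < k) (x - (r i)%:R).
Proof. by rewrite horner_prod; apply: eq_bigr => i _; rewrite hornerXsubC. Qed.

Lemma root_poly_of_roots r k i : (i < k)%N -> (poly_of_roots r k).[(r i)%:R] = 0.
Proof.
by move=> lt_ik; rewrite horner_poly_of_roots (bigD1 (Ordinal lt_ik)) //= subrr mul0r.
Qed.

Lemma poly_of_roots_neq0 r k b :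
  (forall i, (i < k)%N -> r i != b) -> (poly_of_roots r k).[b%:R] != 0.
Proof.
move=> r_neq_b; rewrite horner_poly_of_roots; apply/prodf_neq0 => i _.
by rewrite subr_eq0 eqf_nat eq_sym r_neq_b.
Qed.

Lemma horner_ffact p b : (poly_of_roots id p).[b%:R] = (b ^_ p)%:R.
Proof.
elim: p => [|p IHp]; first by rewrite horner_poly_of_roots big_ord0.
rewrite horner_poly_of_roots big_ord_recr /= -(horner_poly_of_roots id) IHp ffactnSr natrM.
have [le_pb | lt_bp] := leqP p b; first by rewrite natrB.
by rewrite ffact_small // !mul0r.
Qed.

Lemma ffact_basis K (P : {poly C}) :
  (size P <= K)%N -> exists c : nat -> C, P = \sum_(p < K) c p *: poly_of_roots id p.
Proof.
elim: K P => [|K IHK] P sP.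
  by exists (fun=> 0); rewrite big_ord0; apply/size_poly_leq0P.
have [|c def_P] := IHK (P - P`_K *: poly_of_roots id K).
  apply: size_subr_eq_coef => //; last by rewrite coefZ coef_poly_of_roots_top mulr1.
  by rewrite (leq_trans (size_scale_leq _ _)) ?size_poly_of_roots.
exists (fun p => if (p < K)%N then c p else P`_K).
rewrite big_ord_recr /= ltnn; under eq_bigr => p _ do rewrite ltn_ord.
by rewrite -def_P subrK.
Qed.

Lemma form_poly_I0 n D e (U W : {poly C}) :
  (2 * e <= D)%N -> (n + e <= D)%N -> (size U <= e.+1)%N -> (size W <= e)%N ->
  I0 n (form D (fun b => U.[b%:R] + (-1) ^+ b * W.[b%:R])).
Proof.
move=> le_2e_D le_ne_D /ffact_basis[c ->] /ffact_basis[c' ->].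
rewrite formD; apply: in_idealD.
  rewrite (@eq_form _ _ (fun b => \sum_(p < e.+1) c p * (b ^_ p)%:R)); last first.
    by move=> b _; rewrite horner_sum; apply: eq_bigr => p _; rewrite hornerZ horner_ffact.
  rewrite form_sum; apply: in_ideal_sum => p _; rewrite formZ.
  by apply/in_idealZ/form_ffact_I0; have := ltn_ord p; lia.
rewrite (@eq_form _ _ (fun b => \sum_(p < e) c' p * ((-1) ^+ b * (b ^_ p)%:R))); last first.
  move=> b _; rewrite horner_sum mulr_sumr; apply: eq_bigr => p _.
  by rewrite hornerZ horner_ffact mulrCA.
rewrite form_sum; apply: in_ideal_sum => p _; rewrite formZ.
by apply/in_idealZ/form_sign_ffact_I0; have := ltn_ord p; lia.
Qed.

Lemma lead_mono_form D j phi :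
  (2 * j <= D)%N -> phi j != 0 -> (forall b, (b < j)%N -> phi b = 0) ->
  form D phi != 0 /\ lead_mono (form D phi) (mono (D - 2 * j) j).
Proof.
move=> le_2j_D phi_j_neq0 phi_lt_j.
have coef_j : (form D phi)@_(mono (D - 2 * j) j) != 0.
  by rewrite mcoeff_form subnK // eqxx mulf_neq0 ?kappa_neq0.
split; first by apply: contraNneq coef_j => ->; rewrite mcoeff0.
split=> [|m]; first by rewrite mcoeff_msupp.
rewrite mcoeff_msupp [m]monoE mcoeff_form eq_mono /mono_gt /wdeg !mono_i2 !mono_i3.
set a := m i2; set b := m i3.
case: (a + 2 * b =P D)%N => [def_D coef_ab_neq0 ne_ab | _]; last by rewrite eqxx.
have le_jb : (j <= b)%N.
  by rewrite leqNgt; apply: contraNN coef_ab_neq0 => /phi_lt_j->; rewrite mul0r.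
have ne_jb : j != b by apply: contraNneq ne_ab => eq_jb; apply/andP; split; apply/eqP; lia.
(* Same weight, and grevlex prefers the smaller exponent of alpha3. *)
by rewrite ne_jb; apply/orP; right; apply/andP; split; [apply/eqP | ]; lia.
Qed.

Lemma parity_interpolation j :
  exists U W : {poly C},
    [/\ (size U <= (uphalf j).+1)%N, (size W <= uphalf j)%N,
        U.[j%:R] + (-1) ^+ j * W.[j%:R] != 0 &
        forall b, (b < j)%N -> U.[b%:R] + (-1) ^+ b * W.[b%:R] = 0].
Proof.
pose A := poly_of_roots (fun k => 2 * k)%N (uphalf j).
(* The odd b < j are fewer than uphalf j; B gets the harmless extra root j + 1. *)
pose B := poly_of_roots (fun k => if 2 * k + 1 < j then 2 * k + 1 else j.+1)%N (uphalf j).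
have two_neq0 : 2%:R != 0 :> C by rewrite natf_eq0.
have by_parity x b : (2^-1 *: (A + B)).[x] + (-1) ^+ b * (2^-1 *: (A - B)).[x] =
                     if odd b then B.[x] else A.[x].
  by rewrite !(hornerD, hornerN, hornerZ) -signr_odd; case: odd; rewrite ?expr1 ?expr0; field.
exists (2^-1 *: (A + B)), (2^-1 *: (A - B)); split.
- rewrite (leq_trans (size_scale_leq _ _)) // (leq_trans (size_polyD _ _)) //.
  by rewrite !size_poly_of_roots maxnn.
- rewrite (leq_trans (size_scale_leq _ _)) // size_subr_eq_coef ?size_poly_of_roots //.
  by rewrite !coef_poly_of_roots_top.
- rewrite by_parity; case: ifP => odd_j; apply: poly_of_roots_neq0 => k lt_k.
    by case: ifP => [? | _]; apply/eqP; lia.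
  move: lt_k; rewrite uphalf_half odd_j; have := odd_double_half j; rewrite odd_j.
  by move=> ? ?; apply/eqP; lia.
- move=> b lt_bj; rewrite by_parity; have := odd_double_half b.
  case: ifP => odd_b def_b.
    rewrite (_ : b = if 2 * b./2 + 1 < j then 2 * b./2 + 1 else j.+1)%N.
      by apply: root_poly_of_roots; rewrite uphalf_half; lia.
    by rewrite ifT; lia.
  by rewrite (_ : b = 2 * b./2)%N; [apply: root_poly_of_roots; rewrite uphalf_half | ]; lia.
Qed.

Theorem lead_term_ideal_I0_mono n i j :
  (2 * n <= 2 * i + 3 * j)%N -> in_lead_term_ideal (I0 (C := C) n) 'X_[mono i j].
Proof.
move=> le_n_ij; pose D := (i + 2 * j)%N.
have [U [W [size_U size_W phi_j_neq0 phi_lt_j]]] := parity_interpolation j.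
have le_2j_D : (2 * j <= D)%N by rewrite leq_addl.
have [F_neq0 lead_F] := lead_mono_form le_2j_D phi_j_neq0 phi_lt_j.
apply: lead_term_ideal_lead_mono F_neq0 _; last by rewrite addnK in lead_F.
by apply: form_poly_I0 size_U size_W; rewrite /D uphalf_half; lia.
Qed.

End CharacteristicZero.

Theorem proposition4p1 (R : realType) (n i j : nat) :
  (2 * n <= 2 * i + 3 * j)%N ->
  in_lead_term_ideal (I0 (C := R[i]) n) 'X_[mono i j].
Proof. exact/lead_term_ideal_I0_mono/pchar_num. Qed.
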